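(* Every polynomial functor on $\mathsf{Nom}$ has a canonical locally monotone extension to $\mathrm{Kl}(\mathcal{P}_{\mathsf{fs}})$.
   Context: Fix a countably infinite set $\mathbb{A}$ of names; $\mathsf{Nom}$ is the category of nominal sets and equivariant maps. $\mathcal{P}_{\mathsf{fs}}$ is the monad of finitely supported subsets on $\mathsf{Nom}$, with unit $x\mapsto\{x\}$ and multiplication union; $\mathrm{Kl}(\mathcal{P}_{\mathsf{fs}})$ is its Kleisli category and $J\colon\mathsf{Nom}\to\mathrm{Kl}(\mathcal{P}_{\mathsf{fs}})$ the canonical functor. Polynomial functors are those generated by the grammar $F::=C\mid\mathrm{Id}\mid F\times F\mid\coprod_{i\in I}F_i$, with $C$ ranging over constant functors and $I$ arbitrary. An extension of $F$ is an endofunctor $\overline{F}$ on $\mathrm{Kl}(\mathcal{P}_{\mathsf{fs}})$ with $\overline{F}J=JF$; locally monotone means monotone on hom-sets ordered pointwise by inclusion. The canonical extension is built along the grammar: constants and identity extend trivially; coproducts via $\overline{F+G}(f)=[T\mathsf{inl},T\mathsf{inr}]\cdot(\overline{F}f+\overline{G}f)$; finite products via the double strength $d\colon TX\times TY\to T(X\times Y)$ of the commutative monad $\mathcal{P}_{\mathsf{fs}}$ (with strength $(x,S)\mapsto\{(x,s):s\in S\}$), i.e. $\overline{F\times G}(f)=d\cdot(\overline{F}f\times\overline{G}f)$. *)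

From Stdlib Require Import List.

Definition atom := nat.

Record perm : Type := Perm {
  pf : atom -> atom;
  pinv : atom -> atom;
  pf_pinv : forall a, pf (pinv a) = a;
  pinv_pf : forall a, pinv (pf a) = a;
  pf_finite : exists n, forall a, n <= a -> pf a = a
}.

Definition is_action {X : Type} (act : perm -> X -> X) : Prop :=
  (forall (p : perm) (x : X), (forall a, pf p a = a) -> act p x = x) /\
  (forall (p q r : perm) (x : X), (forall a, pf r a = pf p (pf q a)) ->
      act r x = act p (act q x)).

Definition supports {X : Type} (act : perm -> X -> X) (A : list atom) (x : X)
  : Prop :=
  forall p : perm, (forall a, In a A -> pf p a = a) -> act p x = x.

Definition fin_supp {X : Type} (act : perm -> X -> X) (x : X) : Prop :=
  exists A : list atom, supports act A x.

Definition is_nominal {X : Type} (act : perm -> X -> X) : Prop :=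
  is_action act /\ forall x, fin_supp act x.

Record nomset : Type := NomSet {
  car :> Type;
  nact : perm -> car -> car;
  nact_nominal : is_nominal nact
}.

Definition equivariant {X Y : Type} (aX : perm -> X -> X) (aY : perm -> Y -> Y)
  (f : X -> Y) : Prop :=
  forall p x, f (aX p x) = aY p (f x).

Definition pset (X : Type) : Type := X -> Prop.

Definition Pmap {X Y : Type} (f : X -> Y) (S : pset X) : pset Y :=
  fun y => exists x, S x /\ f x = y.

Definition eta {X : Type} (x : X) : pset X := fun y => y = x.

Definition mu {X : Type} (SS : pset (pset X)) : pset X :=
  fun x => exists S, SS S /\ S x.

Definition pact {X : Type} (act : perm -> X -> X) (p : perm) (S : pset X)
  : pset X := Pmap (act p) S.

(** Kleisli morphisms X -> P_fs Y: equivariant maps into finitely supported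
    subsets. *)
Definition kl_mor {X Y : Type} (aX : perm -> X -> X) (aY : perm -> Y -> Y)
  (f : X -> pset Y) : Prop :=
  (forall x, fin_supp (pact aY) (f x)) /\ equivariant aX (pact aY) f.

Definition kcomp {X Y Z : Type} (g : Y -> pset Z) (f : X -> pset Y)
  : X -> pset Z := fun x => mu (Pmap g (f x)).

Definition J {X Y : Type} (h : X -> Y) : X -> pset Y := fun x => eta (h x).

Definition kl_le {X Y : Type} (f g : X -> pset Y) : Prop :=
  forall x y, f x y -> g x y.

Definition strength {X Y : Type} (xS : X * pset Y) : pset (X * Y) :=
  Pmap (fun s => (fst xS, s)) (snd xS).

Definition costrength {X Y : Type} (Sy : pset X * Y) : pset (X * Y) :=
  Pmap (fun s => (s, snd Sy)) (fst Sy).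

Definition dstrength {X Y : Type} (ST : pset X * pset Y) : pset (X * Y) :=
  mu (Pmap (@strength X Y) (costrength ST)).

Inductive poly : Type :=
| PConst (C : nomset)
| PId
| PProd (F G : poly)
| PCoprod (I : Type) (Fs : I -> poly).

Fixpoint Fobj (F : poly) (X : Type) : Type :=
  match F with
  | PConst C => car C
  | PId => X
  | PProd F1 F2 => (Fobj F1 X * Fobj F2 X)%type
  | PCoprod Ix Fs => {i : Ix & Fobj (Fs i) X}
  end.

Fixpoint Fact (F : poly) (X : Type) (a : perm -> X -> X)
  : perm -> Fobj F X -> Fobj F X :=
  match F return perm -> Fobj F X -> Fobj F X with
  | PConst C => nact C
  | PId => a
  | PProd F1 F2 => fun p u => (Fact F1 X a p (fst u), Fact F2 X a p (snd u))
  | PCoprod Ix Fs => fun p u =>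
      existT (fun i => Fobj (Fs i) X) (projT1 u)
             (Fact (Fs (projT1 u)) X a p (projT2 u))
  end.

Fixpoint Fmap (F : poly) {X Y : Type} (h : X -> Y) : Fobj F X -> Fobj F Y :=
  match F return Fobj F X -> Fobj F Y with
  | PConst C => fun c => c
  | PId => h
  | PProd F1 F2 => fun u => (Fmap F1 h (fst u), Fmap F2 h (snd u))
  | PCoprod Ix Fs => fun u =>
      existT (fun i => Fobj (Fs i) Y) (projT1 u) (Fmap (Fs (projT1 u)) h (projT2 u))
  end.

Fixpoint Fext (F : poly) {X Y : Type} (f : X -> pset Y)
  : Fobj F X -> pset (Fobj F Y) :=
  match F return Fobj F X -> pset (Fobj F Y) with
  | PConst C => fun c => eta c
  | PId => f
  | PProd F1 F2 => fun u =>
      dstrength (Fext F1 f (fst u), Fext F2 f (snd u))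
  | PCoprod Ix Fs => fun u =>
      Pmap (fun v => existT (fun i => Fobj (Fs i) Y) (projT1 u) v)
           (Fext (Fs (projT1 u)) f (projT2 u))
  end.

(* On subsets the double
   strength is simply the cartesian product, [dstrength (S, T) = S x T], so
   each clause reduces to an elementary fact about products and images of
   subsets (naturality, compatibility with singletons and with Kleisli
   composition, monotonicity); a finite support of a pair is the concatenation
   of supports of its components. *)
From Stdlib Require Import List FunctionalExtensionality PropExtensionality.

Lemma pset_ext {X : Type} (S T : pset X) : (forall x, S x <-> T x) -> S = T.
Proof.
  intro H; apply functional_extensionality; intro x.
  apply propositional_extensionality; apply H.
Qed.

Lemma Pmap_comp {X Y Z : Type} (g : Y -> Z) (f : X -> Y) (S : pset X) :
  Pmap g (Pmap f S) = Pmap (fun x => g (f x)) S.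
Proof.
  apply pset_ext; intro z; split.
  - intros [y [[x [Hx <-]] <-]]; exists x; split; auto.
  - intros [x [Hx <-]]; exists (f x); split; [exists x; split|]; auto.
Qed.

Lemma Pmap_eta {X Y : Type} (f : X -> Y) (x : X) : Pmap f (eta x) = eta (f x).
Proof.
  apply pset_ext; intro y; unfold eta; split.
  - intros [x' [-> <-]]; reflexivity.
  - intros ->; exists x; auto.
Qed.

Lemma Pmap_mu {X Y : Type} (f : X -> Y) (SS : pset (pset X)) :
  Pmap f (mu SS) = mu (Pmap (Pmap f) SS).
Proof.
  apply pset_ext; intro y; split.
  - intros [x [[S [HS Hx]] <-]]; exists (Pmap f S); split; [exists S|exists x]; auto.
  - intros [T [[S [HS <-]] [x [Hx <-]]]]; exists x; split; [exists S|]; auto.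
Qed.

Lemma mu_eta {X : Type} (S : pset X) : mu (eta S) = S.
Proof.
  apply pset_ext; intro x; unfold mu, eta; split.
  - intros [T [-> HT]]; exact HT.
  - intro Hx; exists S; auto.
Qed.

Lemma in_kcomp {X Y Z : Type} (g : Y -> pset Z) (f : X -> pset Y) x z :
  kcomp g f x z <-> exists y, f x y /\ g y z.
Proof.
  unfold kcomp, mu, Pmap; split.
  - intros [S [[y [Hy <-]] Hz]]; eauto.
  - intros [y [Hy Hz]]; exists (g y); eauto.
Qed.

Lemma in_dstrength {X Y : Type} (S : pset X) (T : pset Y) (z : X * Y) :
  dstrength (S, T) z <-> S (fst z) /\ T (snd z).
Proof.
  unfold dstrength, mu, Pmap, costrength, strength; simpl; split.
  - intros [W [[c [[s [Hs <-]] <-]] [t [Ht <-]]]]; simpl; auto.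
  - destruct z as [x y]; simpl; intros [Hx Hy].
    exists (fun z => exists t, T t /\ (x, t) = z); split.
    + exists (x, T); split; [exists x|]; auto.
    + exists y; auto.
Qed.

Lemma dstrength_eta {X Y : Type} (x : X) (y : Y) :
  dstrength (eta x, eta y) = eta (x, y).
Proof.
  apply pset_ext; intros [x' y']; rewrite in_dstrength; unfold eta; simpl; split.
  - intros [-> ->]; reflexivity.
  - intro E; injection E; auto.
Qed.

Lemma Pmap_dstrength {X1 X2 Y1 Y2 : Type} (h1 : X1 -> Y1) (h2 : X2 -> Y2)
    (S : pset X1) (T : pset X2) :
  Pmap (fun z => (h1 (fst z), h2 (snd z))) (dstrength (S, T))
  = dstrength (Pmap h1 S, Pmap h2 T).
Proof.
  apply pset_ext; intros [y1 y2]; rewrite in_dstrength; simpl; split.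
  - intros [[x1 x2] [Hx E]]; apply in_dstrength in Hx; injection E; intros <- <-.
    destruct Hx; split; [exists x1|exists x2]; auto.
  - intros [[x1 [H1 <-]] [x2 [H2 <-]]].
    exists (x1, x2); rewrite in_dstrength; auto.
Qed.

Lemma dstrength_kcomp {X1 X2 Y1 Y2 Z1 Z2 : Type}
    (f1 : X1 -> pset Y1) (g1 : Y1 -> pset Z1)
    (f2 : X2 -> pset Y2) (g2 : Y2 -> pset Z2) (x1 : X1) (x2 : X2) :
  dstrength (kcomp g1 f1 x1, kcomp g2 f2 x2)
  = kcomp (fun y => dstrength (g1 (fst y), g2 (snd y)))
          (fun x => dstrength (f1 (fst x), f2 (snd x))) (x1, x2).
Proof.
  apply pset_ext; intros [z1 z2]; rewrite in_dstrength, !in_kcomp; simpl.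
  split.
  - intros [[y1 [F1 G1]] [y2 [F2 G2]]].
    exists (y1, y2); rewrite !in_dstrength; auto.
  - intros [[y1 y2] [F G]]; apply in_dstrength in F; apply in_dstrength in G; simpl in *.
    destruct F, G; split; eauto.
Qed.

Lemma pact_Pmap {X Y : Type} (a : perm -> X -> X) (b : perm -> Y -> Y)
    (h : X -> Y) (p : perm) (S : pset X) :
  (forall x, b p (h x) = h (a p x)) ->
  pact b p (Pmap h S) = Pmap h (pact a p S).
Proof.
  intro Hh; unfold pact; rewrite !Pmap_comp.
  apply f_equal2; [apply functional_extensionality; exact Hh | reflexivity].
Qed.

Lemma Fact_action (F : poly) (X : Type) (a : perm -> X -> X) :
  is_action a -> is_action (Fact F X a).
Proof.
  intro Ha; induction F as [C| |F1 IH1 F2 IH2|I Fs IH].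
  - exact (proj1 (nact_nominal C)).
  - exact Ha.
  - destruct IH1 as [id1 comp1], IH2 as [id2 comp2]; split.
    + intros p [u1 u2] Hp; simpl; rewrite id1, id2; auto.
    + intros p q r [u1 u2] Hr; simpl; rewrite (comp1 p q r), (comp2 p q r); auto.
  - split.
    + intros p [i v] Hp; simpl; rewrite (proj1 (IH i)); auto.
    + intros p q r [i v] Hr; simpl; rewrite (proj2 (IH i) p q r); auto.
Qed.

Lemma Fact_fin_supp (F : poly) (X : Type) (a : perm -> X -> X) :
  (forall x, fin_supp a x) -> forall u, fin_supp (Fact F X a) u.
Proof.
  intro Ha; induction F as [C| |F1 IH1 F2 IH2|I Fs IH].
  - exact (proj2 (nact_nominal C)).
  - exact Ha.
  - intros [u1 u2]; destruct (IH1 u1) as [A HA], (IH2 u2) as [B HB].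
    exists (A ++ B); intros p Hp; simpl.
    f_equal; [apply HA|apply HB]; intros b Hb; apply Hp, in_or_app; auto.
  - intros [i v]; destruct (IH i v) as [A HA].
    exists A; intros p Hp; simpl; rewrite (HA p Hp); reflexivity.
Qed.

Lemma Fext_equivariant (F : poly) (X Y : Type) (aX : perm -> X -> X)
    (aY : perm -> Y -> Y) (f : X -> pset Y) :
  equivariant aX (pact aY) f ->
  equivariant (Fact F X aX) (pact (Fact F Y aY)) (Fext F f).
Proof.
  intros Hf p; induction F as [C| |F1 IH1 F2 IH2|I Fs IH]; simpl.
  - intro c; symmetry; apply Pmap_eta.
  - apply Hf.
  - intros [u1 u2]; simpl; rewrite IH1, IH2; symmetry; apply Pmap_dstrength.
  - intros [i v]; simpl; rewrite IH; symmetry; apply pact_Pmap; reflexivity.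
Qed.

Lemma Fext_fin_supp (F : poly) (X Y : Type) (aY : perm -> Y -> Y)
    (f : X -> pset Y) :
  (forall x, fin_supp (pact aY) (f x)) ->
  forall u, fin_supp (pact (Fact F Y aY)) (Fext F f u).
Proof.
  intro Hf; induction F as [C| |F1 IH1 F2 IH2|I Fs IH]; simpl.
  - intro c; destruct (proj2 (nact_nominal C) c) as [A HA].
    exists A; intros p Hp; unfold pact; rewrite Pmap_eta, (HA p Hp); reflexivity.
  - exact Hf.
  - intros [u1 u2]; destruct (IH1 u1) as [A HA], (IH2 u2) as [B HB].
    exists (A ++ B); intros p Hp.
    assert (HpA : forall a, In a A -> pf p a = a) by (intros; apply Hp, in_or_app; auto).
    assert (HpB : forall a, In a B -> pf p a = a) by (intros; apply Hp, in_or_app; auto).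
    simpl; unfold pact in *; rewrite Pmap_dstrength, (HA p HpA), (HB p HpB).
    reflexivity.
  - intros [i v]; destruct (IH i v) as [A HA].
    exists A; intros p Hp; simpl; rewrite pact_Pmap with (a := Fact (Fs i) Y aY);
      [rewrite (HA p Hp)|]; reflexivity.
Qed.

Lemma Fext_eta (F : poly) (X : Type) (u : Fobj F X) :
  Fext F (@eta X) u = eta u.
Proof.
  induction F as [C| |F1 IH1 F2 IH2|I Fs IH]; simpl; try reflexivity.
  - destruct u as [u1 u2]; simpl; rewrite IH1, IH2; apply dstrength_eta.
  - destruct u as [i v]; simpl; rewrite IH; apply Pmap_eta.
Qed.

Lemma Fext_J (F : poly) (X Y : Type) (h : X -> Y) (u : Fobj F X) :
  Fext F (J h) u = J (Fmap F h) u.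
Proof.
  induction F as [C| |F1 IH1 F2 IH2|I Fs IH]; simpl; try reflexivity.
  - destruct u as [u1 u2]; simpl; rewrite IH1, IH2; apply dstrength_eta.
  - destruct u as [i v]; simpl; rewrite IH; exact (Pmap_eta _ _).
Qed.

Lemma Fext_kcomp (F : poly) (X Y Z : Type) (f : X -> pset Y) (g : Y -> pset Z)
    (u : Fobj F X) :
  Fext F (kcomp g f) u = kcomp (Fext F g) (Fext F f) u.
Proof.
  induction F as [C| |F1 IH1 F2 IH2|I Fs IH]; simpl.
  - unfold kcomp; rewrite Pmap_eta, mu_eta; reflexivity.
  - reflexivity.
  - destruct u as [u1 u2]; simpl; rewrite IH1, IH2; apply dstrength_kcomp.
  - destruct u as [i v]; simpl; rewrite IH; unfold kcomp.
    rewrite Pmap_mu, !Pmap_comp; reflexivity.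
Qed.

Lemma Fext_mono (F : poly) (X Y : Type) (f g : X -> pset Y) :
  kl_le f g -> kl_le (Fext F f) (Fext F g).
Proof.
  intro Hfg; induction F as [C| |F1 IH1 F2 IH2|I Fs IH]; simpl.
  - intros c d Hd; exact Hd.
  - exact Hfg.
  - intros [u1 u2] z; rewrite !in_dstrength; simpl.
    intros [H1 H2]; split; [apply IH1|apply IH2]; auto.
  - intros [i v] z [w [Hw <-]]; exists w; split; [apply IH|]; auto.
Qed.

Theorem corollary3p14 (F : poly) :
  (* F X is again a nominal set *)
  (forall X : nomset, is_nominal (Fact F X (nact X))) /\
  (* Fext F maps Kleisli morphisms X -> P_fs Y to Kleisli morphisms FX -> P_fs FY *)
  (forall (X Y : nomset) (f : X -> pset Y),
      kl_mor (nact X) (nact Y) f ->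
      kl_mor (Fact F X (nact X)) (Fact F Y (nact Y)) (Fext F f)) /\
  (* preservation of Kleisli identities *)
  (forall X : nomset, Fext F (@eta X) = @eta (Fobj F X)) /\
  (* preservation of Kleisli composition *)
  (forall (X Y Z : nomset) (f : X -> pset Y) (g : Y -> pset Z),
      kl_mor (nact X) (nact Y) f -> kl_mor (nact Y) (nact Z) g ->
      Fext F (kcomp g f) = kcomp (Fext F g) (Fext F f)) /\
  (* extension: Fbar J = J F *)
  (forall (X Y : nomset) (h : X -> Y),
      equivariant (nact X) (nact Y) h ->
      Fext F (J h) = J (Fmap F h)) /\
  (* local monotonicity *)
  (forall (X Y : nomset) (f g : X -> pset Y),
      kl_mor (nact X) (nact Y) f -> kl_mor (nact X) (nact Y) g ->
      kl_le f g -> kl_le (Fext F f) (Fext F g)).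
Proof.
  split; [|split; [|split; [|split; [|split]]]].
  - intro X; split.
    + apply Fact_action, (nact_nominal X).
    + apply Fact_fin_supp, (nact_nominal X).
  - intros X Y f [Hsupp Hequiv]; split.
    + apply Fext_fin_supp, Hsupp.
    + apply Fext_equivariant, Hequiv.
  - intro X; apply functional_extensionality, Fext_eta.
  - intros X Y Z f g _ _; apply functional_extensionality, Fext_kcomp.
  - intros X Y h _; apply functional_extensionality, Fext_J.
  - intros X Y f g _ _; apply Fext_mono.
Qed.
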